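(* Let $G$ be a graph with at least one isolated vertex such that $G\ne\widetilde G$. If $G$ has a minimum twin cover that is also a determining set for $G$, then for every $t\ge1$, \[\det(\mu_t(G))=(t+1)\det(G)+t-1.\]
   Context: All graphs are finite and simple. For a graph $G$ with $V(G)=\{v_1,\dots,v_n\}$ and an integer $t\ge1$, the generalized Mycielskian $\mu_t(G)$ has vertex set $\{u_i^s: 1\le i\le n,\ 0\le s\le t\}\cup\{w\}$, where $u_i^0$ is identified with $v_i$. Its edges are: $u_i^0u_j^0$ for each edge $v_iv_j$ of $G$; $u_i^su_j^{s+1}$ and $u_j^su_i^{s+1}$ for each edge $v_iv_j$ of $G$ and each $0\le s<t$; and $u_i^tw$ for all $1\le i\le n$. A set $S\subseteq V(G)$ is a determining set for $G$ if the only automorphism of $G$ fixing every vertex of $S$ is the identity; $\det(G)$ is the minimum size of a determining set. Two vertices are twins if they have the same open neighborhood; being twins is an equivalence relation on $V(G)$, and the twin quotient $\widetilde G$ has the equivalence classes as vertices, with two classes adjacent iff some members are adjacent in $G$ ($G\ne\widetilde G$ means $G$ has a pair of distinct twins). A minimum twin cover is a minimum-size vertex subset containing at least one vertex from every pair of distinct twins. *)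

From mathcomp Require Import all_boot all_order all_fingroup.
Set Implicit Arguments. Unset Strict Implicit. Unset Printing Implicit Defensive.

Section Graphs.
Variable T : finType.
Variable e : rel T.

Definition simple_graph := symmetric e /\ irreflexive e.

Definition is_aut (f : {perm T}) : bool :=
  [forall x, forall y, e (f x) (f y) == e x y].

Definition determining (S : {set T}) : bool :=
  [forall f : {perm T}, is_aut f ==> [forall x in S, f x == x] ==> (f == 1%g)].

(* det(G): minimum size of a determining set (setT is always determining) *)
Definition detG : nat :=
  \big[minn/#|T|]_(S : {set T} | determining S) #|S|.

Definition isolated (v : T) := forall u, ~~ e v u.

Definition twins (x y : T) := forall z, e x z = e y z.

(* G <> twin quotient: G has a pair of distinct twins *)
Definition has_distinct_twins := exists x y, x != y /\ twins x y.

Definition twin_cover (S : {set T}) :=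
  forall x y, x != y -> twins x y -> (x \in S) || (y \in S).

Definition min_twin_cover (S : {set T}) :=
  twin_cover S /\ forall S', twin_cover S' -> #|S| <= #|S'|.

(* generalized Mycielskian mu_t(G): vertex Some (v, s) is u_v^s (s <= t),
   None is the apex w. *)
Definition myc_rel (t : nat) : rel (option (T * 'I_t.+1)) :=
  fun a b =>
    match a, b with
    | Some (x, i), Some (y, j) =>
        [&& (i : nat) == 0, (j : nat) == 0 & e x y]
        || (e x y && (((j : nat) == i.+1) || ((i : nat) == j.+1)))
    | Some (_, i), None => (i : nat) == t
    | None, Some (_, j) => (j : nat) == t
    | None, None => false
    end.

End Graphs.

From mathcomp Require Import all_boot all_order all_fingroup zify.
Set Implicit Arguments. Unset Strict Implicit. Unset Printing Implicit Defensive.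
Import Order.TTheory.

(* Since a transposition of two twins is an automorphism, every determining
   set is a twin cover; hence det(G) = |S|.  Some isolated vertex vs lies
   outside S, otherwise deleting an isolated vertex from S leaves a smaller
   twin cover.
   Upper bound: the set of all copies u_x^s (x in S) together with the copies
   u_vs^s (0 < s < t) has at most (t+1)|S| + t - 1 elements and is
   determining.  An automorphism f fixing it fixes the apex w (the unique
   neighbour of a top copy of an isolated vertex), preserves every layer on
   copies of non-isolated vertices and on the top layer, induces on layer 0
   an automorphism of G fixing S (hence trivial), and fixes each higher layer
   because a moved copy would be a twin of its image, contradicting that S
   is a twin cover.  The isolated copy u_vs^0 is the only isolated vertex of
   mu_t(G) outside the set, so it is fixed too.
   Lower bound: a determining set D of mu_t(G) is a twin cover, so each
   layer slice of D is a twin cover of G.  The copies of isolated vertices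
   below the top layer are pairwise twins in mu_t(G), so all of them but one
   lie in D; hence t - 1 layers contain every isolated vertex and have at
   least |S| + 1 elements. *)

Section Automorphisms.
Variables (U : finType) (r : rel U).

Lemma aut_edge (f : {perm U}) : is_aut r f -> forall x y, r (f x) (f y) = r x y.
Proof. by move=> /forallP H x y; move: (H x) => /forallP /(_ y) /eqP. Qed.

Lemma aut_inv (f : {perm U}) : is_aut r f -> is_aut r (f^-1)%g.
Proof.
move=> Hf; apply/forallP=> x; apply/forallP=> y; apply/eqP.
by rewrite -(aut_edge Hf) !permKV.
Qed.

Lemma aut_edge_inv (f : {perm U}) x z : is_aut r f -> r (f x) z = r x ((f^-1)%g z).
Proof. by move=> Hf; rewrite -(aut_edge Hf x) permKV. Qed.

Lemma twin_swap_aut a b : symmetric r -> twins r a b -> is_aut r (tperm a b).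
Proof.
move=> sym tw; apply/forallP=> x; apply/forallP=> y; apply/eqP.
have tw' z : r z a = r z b by rewrite sym tw sym.
case: (tpermP a b x) => [->|->|/eqP nxa /eqP nxb];
case: (tpermP a b y) => [->|->|/eqP nya /eqP nyb]; subst.
all: by rewrite ?tw ?tw'.
Qed.

(* A determining set must meet every pair of distinct twins, since otherwise
   swapping them is a non-trivial automorphism fixing it. *)
Lemma determining_twin_cover D : symmetric r -> determining r D -> twin_cover r D.
Proof.
move=> sym /forallP dD x y nxy tw; apply/negPn/negP; rewrite negb_or => /andP [hx hy].
move: (dD (tperm x y)); rewrite twin_swap_aut //= => /implyP H.
have : tperm x y == 1%g.
  apply: H; apply/forallP=> z; apply/implyP=> zD; apply/eqP.
  by rewrite tpermD //; apply/eqP=> E; subst z; rewrite zD in hx hy.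
move/eqP/permP/(_ x); rewrite tpermL perm1 => /eqP; by rewrite eq_sym (negbTE nxy).
Qed.

Lemma detG_le D : determining r D -> detG r <= #|D|.
Proof.
move=> dD; rewrite /detG -minEnat.
by have := bigmin_le_cond #|U| (fun S : {set U} => #|S|) dD; rewrite leEnat.
Qed.

Lemma detG_ge k : (forall D, determining r D -> k <= #|D|) -> k <= detG r.
Proof.
move=> H; rewrite /detG -minEnat -leEnat; apply: le_bigmin => [|D /H //].
rewrite leEnat -cardsT; apply: H; apply/forallP=> f; apply/implyP=> _.
apply/implyP=> /forallP fx; apply/eqP/permP=> x; rewrite perm1.
by apply/eqP; move/implyP: (fx x); apply; rewrite inE.
Qed.

End Automorphisms.

Section TwinCovers.
Variables (T : finType) (e : rel T).

Definition has_nbr (x : T) : bool := [exists y, e x y].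

Lemma isolatedP x : reflect (isolated e x) (~~ has_nbr x).
Proof. exact: (iffP existsPn). Qed.

Lemma edge_has_nbr x y : e x y -> has_nbr x.
Proof. by move=> exy; apply/existsP; exists y. Qed.

Lemma no_nbr_edgeF x y : ~~ has_nbr x -> e x y = false.
Proof. by move/existsPn/(_ y)/negbTE. Qed.

Lemma isolated_twins x y : isolated e x -> isolated e y -> twins e x y.
Proof. by move=> hx hy z; rewrite (negbTE (hx z)) (negbTE (hy z)). Qed.

(* The twins of an isolated vertex are isolated, so a twin cover containing
   all isolated vertices stays a twin cover after deleting one of them. *)
Lemma twin_cover_del_isolated A v : twin_cover e A -> isolated e v ->
  (forall u, isolated e u -> u \in A) -> twin_cover e (A :\ v).
Proof.
move=> tc iv allA x y nxy tw; rewrite !in_setD1.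
have iso_twin z : twins e z v -> isolated e z by move=> tz u; rewrite tz; apply: iv.
case: (eqVneq x v) => [xv|xv]; case: (eqVneq y v) => [yv|yv] /=.
- by rewrite xv yv eqxx in nxy.
- by apply/allA/iso_twin => z; rewrite -tw xv.
- by rewrite allA //; apply/iso_twin => z; rewrite tw yv.
- exact: tc.
Qed.

Lemma min_twin_cover_lt S A v : min_twin_cover e S -> twin_cover e A ->
  isolated e v -> (forall u, isolated e u -> u \in A) -> #|S| < #|A|.
Proof.
move=> [_ minS] tcA iv allA.
have := minS _ (twin_cover_del_isolated tcA iv allA).
by rewrite (cardsD1 v A) allA.
Qed.

Lemma min_twin_cover_misses_isolated S v : min_twin_cover e S -> isolated e v ->
  exists2 vs, isolated e vs & vs \notin S.
Proof.
move=> minS iv.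
case: (pickP [pred u | ~~ has_nbr u & u \notin S]) => [vs /andP [/isolatedP ? ?]|none].
  by exists vs.
have allS u : isolated e u -> u \in S.
  by move/isolatedP=> iu; move: (none u) => /= /negbT; rewrite iu negbK.
by have := min_twin_cover_lt minS minS.1 iv allS; rewrite ltnn.
Qed.

Lemma detG_min_twin_cover S : symmetric e -> min_twin_cover e S -> determining e S ->
  detG e = #|S|.
Proof.
move=> sym [_ minS] dS; apply/eqP; rewrite eqn_leq detG_le //=.
by apply: detG_ge => D dD; apply/minS/determining_twin_cover.
Qed.

End TwinCovers.

Section Mycielskian.
Variables (T : finType) (e : rel T) (t : nat).
Hypothesis e_sym : symmetric e.
Hypothesis t_gt0 : 0 < t.

Local Notation M := (@myc_rel T e t).
Local Notation V := (option (T * 'I_t.+1)).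

Definition next_layer (s : 'I_t.+1) (hs : s < t) : 'I_t.+1 := Ordinal (hs : s.+1 < t.+1).

Lemma below_top (s : 'I_t.+1) : (s < t) = (s != ord_max).
Proof. by rewrite ltn_neqAle -ltnS ltn_ord andbT. Qed.

Lemma myc_layerE x y (i j : 'I_t.+1) : M (Some (x, i)) (Some (y, j)) =
  e x y && ([&& i == 0 :> nat & j == 0 :> nat] || (j == i.+1 :> nat) || (i == j.+1 :> nat)).
Proof. by rewrite /=; case: (e x y); rewrite /= ?andbF // andbT orbA. Qed.

Lemma myc_sym : symmetric M.
Proof.
move=> [[x i]|] [[y j]|] //; rewrite !myc_layerE (e_sym y x); congr (_ && _).
by rewrite andbC orbAC -orbA [X in _ || X]orbC.
Qed.

Lemma myc_twins_lift x y s : twins e x y -> twins M (Some (x, s)) (Some (y, s)).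
Proof. by move=> tw [[z j]|] //=; rewrite tw. Qed.

Lemma myc_next_edge x y (s : 'I_t.+1) (hs : s < t) :
  e x y -> M (Some (x, s)) (Some (y, next_layer hs)).
Proof. by move=> exy; rewrite myc_layerE exy /= eqxx orbT. Qed.

Lemma myc_isolated_copy v (s : 'I_t.+1) z : isolated e v -> s < t -> M (Some (v, s)) z = false.
Proof.
move=> /isolatedP iv st; case: z => [[y j]|] /=; last by rewrite ltn_eqF.
by rewrite (no_nbr_edgeF _ iv) !andbF.
Qed.

Lemma myc_isolated_vertex (v : T) b : (forall z, M b z = false) ->
  exists y (j : 'I_t.+1), [/\ b = Some (y, j), ~~ has_nbr e y & j < t].
Proof.
case: b => [[y j]|] iso; last by move: (iso (Some (v, ord_max))); rewrite /= eqxx.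
have jt : j < t by rewrite below_top; apply/negbT/(iso None).
exists y, j; split=> //; apply/existsP=> -[y2 eyy2].
by move: (iso (Some (y2, next_layer jt))); rewrite myc_next_edge.
Qed.

(* When G has two vertices, a vertex of mu_t(G) with a single neighbour c is a
   top copy and c is the apex: the apex has n >= 2 neighbours, and a copy
   u_x^s with s < t adjacent to u_y^j is also adjacent to u_y^(s+1) and to
   u_y^(s-1) (or u_y^0 when s = 0). *)
Lemma myc_single_nbr (x1 x2 : T) z c : x1 != x2 -> (forall y, M z y = (y == c)) -> c = None.
Proof.
move=> nx nbr; case: z nbr => [[x s]|] nbr; last first.
  have c1 := nbr (Some (x1, ord_max)); have c2 := nbr (Some (x2, ord_max)).
  rewrite /= eqxx in c1 c2; move: c1 c2 => /esym/eqP <- /esym/eqP [] /eqP.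
  by rewrite eq_sym (negbTE nx).
case st: (s == t :> nat); first by move: (nbr None) => /=; rewrite st => /esym/eqP.
have hs : s < t by rewrite below_top; apply: negbT.
have := nbr c; rewrite eqxx; case: c nbr => [[y j]|] nbr; last by rewrite /= st.
rewrite myc_layerE => /andP [exy _].
have hp : s.-1 < t.+1 by rewrite (leq_ltn_trans (leq_pred _)) // ltnS ltnW.
have hup := @myc_next_edge x y s hs exy.
have hdown : M (Some (x, s)) (Some (y, Ordinal hp)).
  rewrite myc_layerE exy /=; case: (posnP s) => [->|s_pos] //.
  by rewrite prednK ?eqxx ?orbT.
rewrite nbr in hup; rewrite nbr -(eqP hup) in hdown.
by move/eqP: hdown => [] /esym; case: (nat_of_ord s) => // n /=; lia.
Qed.

(* Every automorphism fixes the apex, which is the only neighbour of the top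
   copy of an isolated vertex. *)
Lemma myc_apex_fixed (f : {perm V}) v0 (x1 x2 : T) :
  is_aut M f -> isolated e v0 -> x1 != x2 -> f None = None.
Proof.
move=> Hf iv0 nx; pose a : V := Some (v0, ord_max).
have nbr_a y : M a y = (y == None).
  case: y => [[y j]|] /=; last by rewrite eqxx.
  by rewrite (negbTE (iv0 y)) !andbF.
apply: (myc_single_nbr (z := f a) nx) => y.
rewrite aut_edge_inv // nbr_a.
by apply/eqP/eqP => [<-|->]; rewrite ?permKV ?permK.
Qed.

(* An automorphism fixing the apex preserves every layer on the copies of
   non-isolated vertices and on the top layer, by descending induction on
   the layer: a non-isolated copy in layer s is adjacent to a copy in layer
   s + 1, so its image lies in layer s or s + 2, and the inverse automorphism
   excludes s + 2. *)
Lemma myc_layer_preserved k (g : {perm V}) (s : 'I_t.+1) x :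
  is_aut M g -> g None = None -> t - s = k -> has_nbr e x || (s == t :> nat) ->
  exists x', g (Some (x, s)) = Some (x', s).
Proof.
elim/ltn_ind: k g s x => k IH g s x Hg gw hk hx.
case st: (s == t :> nat).
  have := aut_edge Hg (Some (x, s)) None; rewrite gw /= st.
  case: (g (Some (x, s))) => [[x' j]|] //= /eqP jt.
  by exists x'; congr Some; congr pair; apply/val_inj; rewrite /= jt (eqP st).
rewrite st orbF in hx.
have hs : s < t by rewrite below_top; apply: negbT.
case/existsP: hx => y exy.
have [y' gy] : exists y', g (Some (y, next_layer hs)) = Some (y', next_layer hs).
  apply: (IH (t - s.+1)) => //; first by rewrite -hk; lia.
  by rewrite (@edge_has_nbr _ _ y x) // e_sym.
have := aut_edge Hg (Some (x, s)) (Some (y, next_layer hs)).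
rewrite myc_next_edge // gy.
case E: (g (Some (x, s))) => [[z j]|]; last by move: E; rewrite -gw => /perm_inj.
rewrite myc_layerE => /andP [ezy hj].
have [js|js2] : (j : nat) = s \/ (j : nat) = s.+2 by move: hj; rewrite /=; lia.
  by exists z; congr Some; congr pair; apply/val_inj.
have [z'' gz] : exists z'', (g^-1)%g (Some (z, j)) = Some (z'', j).
  apply: (IH (t - j)) => //; first by move: (ltn_ord j); rewrite js2; lia.
  - exact: aut_inv.
  - by rewrite -gw permK.
  - by rewrite (edge_has_nbr ezy).
by move: gz; rewrite -E permK => -[_] /(congr1 val) /=; lia.
Qed.

Section BaseLayer.
Variable f : {perm V}.
Hypothesis f_aut : is_aut M f.
Hypothesis f_apex : f None = None.

Lemma base_layer_nbr x : has_nbr e x ->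
  exists2 x', f (Some (x, ord0)) = Some (x', ord0) & has_nbr e x'.
Proof.
move=> hx; have [x' fx] : exists x', f (Some (x, ord0)) = Some (x', ord0).
  by apply: (myc_layer_preserved f_aut f_apex erefl); rewrite hx.
exists x' => //; case/existsP: hx => y exy.
have [y' fy] : exists y', f (Some (y, ord0)) = Some (y', ord0).
  apply: (myc_layer_preserved f_aut f_apex erefl).
  by rewrite (@edge_has_nbr _ _ y x) // e_sym.
have := aut_edge f_aut (Some (x, ord0)) (Some (y, ord0)).
rewrite fx fy !myc_layerE /= !andbT exy; exact: edge_has_nbr.
Qed.

Definition base_map (x : T) : T :=
  if has_nbr e x then (if f (Some (x, ord0)) is Some p then p.1 else x) else x.

Lemma base_mapE x : has_nbr e x ->
  f (Some (x, ord0)) = Some (base_map x, ord0) /\ has_nbr e (base_map x).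
Proof. by move=> hx; have [x' fx hx'] := base_layer_nbr hx; rewrite /base_map hx fx. Qed.

Lemma base_map_id x : ~~ has_nbr e x -> base_map x = x.
Proof. by rewrite /base_map => /negbTE ->. Qed.

Lemma base_map_inj : injective base_map.
Proof.
move=> a b; case: (boolP (has_nbr e a)) => na; case: (boolP (has_nbr e b)) => nb.
- move=> hab; have [fa _] := base_mapE na; have [fb _] := base_mapE nb.
  by move: fa; rewrite hab -fb => /perm_inj [].
- by rewrite (base_map_id nb) => hab; have [_] := base_mapE na; rewrite hab (negbTE nb).
- by rewrite (base_map_id na) => hab; have [_] := base_mapE nb; rewrite -hab (negbTE na).
- by rewrite !base_map_id.
Qed.

Definition base_perm : {perm T} := perm base_map_inj.

Lemma base_perm_aut : is_aut e base_perm.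
Proof.
apply/forallP => a; apply/forallP => b; apply/eqP; rewrite !permE.
case: (boolP (has_nbr e a)) => na; last by rewrite base_map_id // !no_nbr_edgeF.
case: (boolP (has_nbr e b)) => nb; last by rewrite (base_map_id nb) ![e _ b]e_sym !no_nbr_edgeF.
have [fa _] := base_mapE na; have [fb _] := base_mapE nb.
by have := aut_edge f_aut (Some (a, ord0)) (Some (b, ord0)); rewrite fa fb !myc_layerE /= !andbT.
Qed.

Lemma base_layer_fixed S : determining e S ->
  (forall x, x \in S -> f (Some (x, ord0)) = Some (x, ord0)) ->
  forall x, has_nbr e x -> f (Some (x, ord0)) = Some (x, ord0).
Proof.
move=> /forallP /(_ base_perm) /implyP /(_ base_perm_aut) /implyP dS fS x hx.
have id_base : base_perm = 1%g.
  apply/eqP/dS/forallP => y; apply/implyP => yS; rewrite permE.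
  case: (boolP (has_nbr e y)) => ny; last by rewrite base_map_id.
  by have [fy _] := base_mapE ny; move: (fS y yS); rewrite fy => -[->].
have [fx _] := base_mapE hx.
by move/permP: id_base => /(_ x); rewrite permE perm1 fx => ->.
Qed.

End BaseLayer.

Definition inner_layers : {set 'I_t.+1} := [set s : 'I_t.+1 | 0 < s < t].

Lemma card_inner_layers : #|inner_layers| = t.-1.
Proof.
have -> : inner_layers = ~: [set ord0; ord_max].
  apply/setP => s; rewrite !inE -!val_eqE /= lt0n.
  by rewrite negb_or below_top.
rewrite cardsCs setCK cards2 card_ord -val_eqE /= eq_sym (negbTE (lt0n_neq0 t_gt0)).
by rewrite subSS subn1.
Qed.

Definition myc_det_set (S : {set T}) (vs : T) : {set V} :=
  [set Some p | p in setX S setT :|: setX [set vs] inner_layers].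

Lemma mem_myc_det_set S vs x s :
  (Some (x, s) \in myc_det_set S vs) = (x \in S) || (x == vs) && (0 < s < t).
Proof. by rewrite mem_imset; last exact: Some_inj; rewrite !inE andbT. Qed.

Lemma card_myc_det_set S vs : #|myc_det_set S vs| <= (t + 1) * #|S| + t - 1.
Proof.
rewrite (leq_trans (leq_imset_card _ _)) // (leq_trans (leq_card_setU _ _)) //.
rewrite !cardsX cards1 cardsT card_ord card_inner_layers; lia.
Qed.

Section DeterminingSet.
Variables (S : {set T}) (vs : T).
Hypothesis S_cover : twin_cover e S.
Hypothesis S_det : determining e S.
Hypothesis vs_iso : isolated e vs.
Hypothesis vs_notin : vs \notin S.
Variable f : {perm V}.
Hypothesis f_aut : is_aut M f.
Hypothesis f_apex : f None = None.
Hypothesis f_fix : forall a, a \in myc_det_set S vs -> f a = a.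

Lemma fix_S_copy x s : x \in S -> f (Some (x, s)) = Some (x, s).
Proof. by move=> xS; rewrite f_fix // mem_myc_det_set xS. Qed.

(* All isolated vertices are twins of vs, so they lie in the cover S. *)
Lemma isolated_in_S x : isolated e x -> x != vs -> x \in S.
Proof.
move=> ix xv; have := S_cover xv (isolated_twins ix vs_iso).
by rewrite (negbTE vs_notin) orbF.
Qed.

(* If f fixes the non-isolated copies in layer s, then a copy in layer s + 1
   and its image are copies of twins, hence of the same vertex since S is a
   twin cover fixed by f. *)
Lemma layer_fixed_step (s : 'I_t.+1) (hs : s < t) x x' :
  (forall z, has_nbr e z -> f (Some (z, s)) = Some (z, s)) ->
  f (Some (x, next_layer hs)) = Some (x', next_layer hs) -> x' = x.
Proof.
move=> fs fx.
have tw : twins e x x'.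
  move=> z; case: (boolP (has_nbr e z)) => nz; last by rewrite ![e _ z]e_sym !no_nbr_edgeF.
  have := aut_edge f_aut (Some (x, next_layer hs)) (Some (z, s)).
  by rewrite fx fs // !myc_layerE /= eqxx !orbT !andbT => ->.
case: (eqVneq x' x) => // nx'; rewrite eq_sym in nx'.
case/orP: (S_cover nx' tw) => [/(fix_S_copy (next_layer hs))|/(fix_S_copy (next_layer hs))].
  by rewrite fx => -[].
by rewrite -{2}fx => /perm_inj [].
Qed.

Lemma nbr_copies_fixed s x : has_nbr e x -> f (Some (x, s)) = Some (x, s).
Proof.
move: x; case: s => n; elim: n => [|n IH] hn x.
  have -> : Ordinal hn = ord0 by apply/val_inj.
  exact: (base_layer_fixed f_aut f_apex S_det (fun y => fix_S_copy ord0)).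
move=> hx; pose s0 : 'I_t.+1 := Ordinal (ltnW hn); have hs0 : s0 < t := hn.
have -> : Ordinal hn = next_layer hs0 by apply/val_inj.
have [x' fx] : exists x', f (Some (x, next_layer hs0)) = Some (x', next_layer hs0).
  by apply: (myc_layer_preserved f_aut f_apex erefl); rewrite hx.
by rewrite fx (layer_fixed_step (IH (ltnW hn)) fx).
Qed.

Lemma top_copies_fixed x : f (Some (x, ord_max)) = Some (x, ord_max).
Proof.
have ht : t.-1 < t by rewrite ltn_predL.
pose s0 : 'I_t.+1 := Ordinal (ltnW ht : t.-1 < t.+1); have hs0 : s0 < t := ht.
have -> : ord_max = next_layer hs0 by apply/val_inj; rewrite /= prednK.
have [x' fx] : exists x', f (Some (x, next_layer hs0)) = Some (x', next_layer hs0).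
  by apply: (myc_layer_preserved f_aut f_apex erefl); rewrite /= prednK // eqxx orbT.
by rewrite fx (layer_fixed_step (fun z => nbr_copies_fixed s0 (x := z)) fx).
Qed.

(* u_vs^0 is isolated in mu_t(G), so is its image; every other isolated
   vertex of mu_t(G) is fixed by f, hence so is u_vs^0. *)
Lemma base_isolated_copy_fixed : f (Some (vs, ord0)) = Some (vs, ord0).
Proof.
set a := Some (vs, ord0).
have iso_fa z : M (f a) z = false by rewrite aut_edge_inv // myc_isolated_copy.
have [y [j [fa ny jt]]] := myc_isolated_vertex vs iso_fa.
have fixed_image : f (Some (y, j)) = Some (y, j) -> f a = a.
  by move=> fy; have /perm_inj <- : f (Some (y, j)) = f a by rewrite fy fa.
case: (eqVneq y vs) => [yv|yv]; last first.
  by apply/fixed_image/fix_S_copy/isolated_in_S => //; apply/isolatedP.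
case: (posnP j) => [j0|jpos].
  by rewrite fa yv; congr Some; congr pair; apply/val_inj.
by apply/fixed_image/f_fix; rewrite mem_myc_det_set yv eqxx jpos jt orbT.
Qed.

Lemma fixing_aut_trivial : f = 1%g.
Proof.
apply/permP => -[[x s]|]; rewrite perm1 //.
case: (boolP (has_nbr e x)) => [hx|/isolatedP ix]; first exact: nbr_copies_fixed.
case: (eqVneq s ord_max) => [->|smax]; first exact: top_copies_fixed.
have st : s < t by rewrite below_top.
case: (eqVneq x vs) => [->|xv]; last exact/fix_S_copy/isolated_in_S.
case: (posnP s) => [s0|spos]; last by rewrite f_fix // mem_myc_det_set eqxx spos st orbT.
have -> : s = ord0 by apply/val_inj; rewrite /= s0.
exact: base_isolated_copy_fixed.
Qed.

End DeterminingSet.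

Lemma myc_det_set_determining S vs (x1 x2 : T) :
  twin_cover e S -> determining e S -> isolated e vs -> vs \notin S -> x1 != x2 ->
  determining M (myc_det_set S vs).
Proof.
move=> tcS dS ivs vsS nx; apply/forallP => f; apply/implyP => Hf.
apply/implyP => /forallP fD; apply/eqP.
apply: (fixing_aut_trivial tcS dS ivs vsS Hf (myc_apex_fixed Hf ivs nx)).
by move=> a aD; apply/eqP; move/implyP: (fD a); apply.
Qed.

Definition layer_slice (D : {set V}) (s : 'I_t.+1) : {set T} := [set x | Some (x, s) \in D].

Lemma slice_twin_cover D s : twin_cover M D -> twin_cover e (layer_slice D s).
Proof.
move=> tcD x y nxy tw; rewrite !inE; apply: tcD (myc_twins_lift s tw).
by apply: contra nxy => /eqP [->].
Qed.

Lemma sum_slices_le D : \sum_(s < t.+1) #|layer_slice D s| <= #|D|.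
Proof.
pose P := [set p : T * 'I_t.+1 | Some p \in D].
have -> : \sum_(s < t.+1) #|layer_slice D s| = #|P|.
  symmetry; rewrite -sum1_card big_mkcond /=.
  rewrite [RHS](eq_bigr (fun s => \sum_(x : T) (if Some (x, s) \in D then 1 else 0))).
    by rewrite [RHS]exchange_big pair_big /=; apply: eq_bigr => -[x s] _; rewrite inE.
  by move=> s _; rewrite -sum1_card big_mkcond /=; apply: eq_bigr => x _; rewrite inE.
rewrite -(card_imset _ (@Some_inj _)); apply/subset_leq_card/subsetP => a.
by case/imsetP => p; rewrite inE => pD ->.
Qed.

(* The copies of isolated vertices below the top layer are pairwise twins,
   so a twin cover misses at most one of them: all layers but the top one
   and at most one other contain every isolated vertex. *)
Lemma isolated_slices D : twin_cover M D -> exists s0 : 'I_t.+1,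
  forall s, s \notin [set ord_max; s0] -> forall v, isolated e v -> v \in layer_slice D s.
Proof.
move=> tcD; pose missing (p : T * 'I_t.+1) := [&& p.2 < t, ~~ has_nbr e p.1 & Some p \notin D].
case: (pickP missing) => [[v1 s1] /and3P [s1t /isolatedP iv1 v1D]|none]; last first.
  exists ord_max => s; rewrite !inE negb_or => /andP [smax _] v /isolatedP iv; rewrite inE.
  by move: (none (v, s)); rewrite /missing /= below_top smax iv => /negbFE.
exists s1 => s; rewrite !inE negb_or -below_top => /andP [st ss1] v iv; rewrite inE.
apply/negPn/negP => vD.
have tw : twins M (Some (v1, s1)) (Some (v, s)) by move=> z; rewrite !myc_isolated_copy.
have nn : Some (v1, s1) != Some (v, s) by apply: contraNneq ss1 => -[_ ->].
by move: (tcD _ _ nn tw); rewrite (negbTE v1D) (negbTE vD).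
Qed.

(* Every slice has at least |S| elements, and at least t - 1 of them at least
   |S| + 1 elements. *)
Lemma myc_det_lower S v0 D : min_twin_cover e S -> isolated e v0 -> determining M D ->
  (t + 1) * #|S| + t - 1 <= #|D|.
Proof.
move=> minS iv0 dD; have tcD := determining_twin_cover myc_sym dD.
have [s0 full] := isolated_slices tcD.
pose A := ~: [set ord_max; s0].
have slice_ge s : #|S| + (s \in A) <= #|layer_slice D s|.
  have tcs := slice_twin_cover s tcD.
  case: (boolP (s \in A)) => [sA|_]; last by rewrite addn0; apply: minS.2.
  by rewrite addn1; apply: (min_twin_cover_lt minS tcs iv0); apply: full; rewrite inE in sA.
have cardA : t.-1 <= #|A|.
  by rewrite cardsCs setCK cards2 card_ord; case: (ord_max != s0) => /=; lia.
have sumA : \sum_(s < t.+1) (s \in A : nat) = #|A|.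
  by rewrite -sum1_card [RHS]big_mkcond; apply: eq_bigr => s _; case: (s \in A).
apply: leq_trans (sum_slices_le D).
apply: (@leq_trans (\sum_(s < t.+1) (#|S| + (s \in A)))); last exact: leq_sum.
rewrite big_split /= sum_nat_const card_ord sumA; lia.
Qed.

End Mycielskian.

Theorem mainTheorem7 (T : finType) (e : rel T) :
  simple_graph e ->
  (exists v : T, isolated e v) ->
  has_distinct_twins e ->
  (exists S : {set T}, min_twin_cover e S /\ determining e S) ->
  forall t : nat, 1 <= t ->
    detG (@myc_rel T e t) = (t + 1) * detG e + t - 1.
Proof.
move=> [e_sym _] [v0 iv0] [x1 [x2 [nx _]]] [S [minS dS]] t t_gt0.
rewrite (detG_min_twin_cover e_sym minS dS).
have [vs ivs vsS] := min_twin_cover_misses_isolated minS iv0.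
apply/eqP; rewrite eqn_leq; apply/andP; split.
- have dD := myc_det_set_determining e_sym t_gt0 minS.1 dS ivs vsS nx.
  by apply: leq_trans (detG_le dD) _; apply: card_myc_det_set.
- by apply: detG_ge => D dD; exact: (myc_det_lower e_sym t_gt0 minS iv0).
Qed.
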